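(* Assume $\ker(K)\cap\ker(D)=\{0\}$. Then for any $\delta\ge 0$ and any reconstructor $\Psi$, the function $\mathcal{J}_{\Psi,\delta}:\mathcal{X}\to\mathbb{R}$, $$\mathcal{J}_{\Psi,\delta}(x)=\|Kx-y^\delta\|_2^2+\lambda\,\|w(\Psi(y^\delta))\odot|Dx|\|_1,$$ is coercive.
   Context: Let $K\in\mathbb{R}^{m\times n}$ with $m\le n$, and let $D_h,D_v\in\mathbb{R}^{n\times n}$ be the discrete horizontal and vertical difference operators; $D:\mathbb{R}^n\to\mathbb{R}^{2n}$, $Dx=\begin{bmatrix}D_hx\\ D_vx\end{bmatrix}$, and $|Dx|\in\mathbb{R}^n$, $(|Dx|)_i=\sqrt{(D_hx)_i^2+(D_vx)_i^2}$. $\mathcal{X}=\{x\in\mathbb{R}^n: x_i\ge 0\ \forall i\}$. Fix $\lambda>0$, $\eta>0$, $p\in(0,1)$, and for $\tilde x\in\mathbb{R}^n$ define weights $(w(\tilde{x}))_i=\big(\eta/\sqrt{\eta^2+(|D\tilde{x}|)_i^2}\big)^{1-p}$. A reconstructor is a Lipschitz continuous map $\Psi:\mathbb{R}^m\to\mathbb{R}^n$. For $\delta\ge0$, $y^\delta\in\mathbb{R}^m$ denotes data $y^\delta=Kx^{GT}+e$ with $x^{GT}\in\mathcal{X}$ and $\|e\|_2\le\delta$. $\odot$ is the entrywise product. *)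

From HB Require Import structures.
From mathcomp Require Import all_boot all_order all_algebra.
From mathcomp Require Import all_classical all_reals.
From mathcomp Require Import exp.
Set Implicit Arguments. Unset Strict Implicit. Unset Printing Implicit Defensive.
Import Order.TTheory GRing.Theory Num.Theory.
Local Open Scope ring_scope.

Section Defs.
Variable R : realType.

Definition norm2 (k : nat) (v : 'cV[R]_k) : R :=
  Num.sqrt (\sum_(i < k) (v i 0) ^+ 2).

Definition norm1 (k : nat) (v : 'cV[R]_k) : R := \sum_(i < k) `|v i 0|.

(* Images of size n1 x n2 (n1 rows, n2 columns) are vectorized row-major:
   pixel (r, c) has index r * n2 + c.  Forward differences with zero
   (Neumann) boundary condition. *)
Definition Dh (n1 n2 : nat) : 'M[R]_(n1 * n2) :=
  \matrix_(i, j)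
    (if (nat_of_ord i %% n2 < n2.-1)%N then
       ((nat_of_ord j == (nat_of_ord i).+1)%:R - (nat_of_ord j == nat_of_ord i)%:R)
     else 0).

Definition Dv (n1 n2 : nat) : 'M[R]_(n1 * n2) :=
  \matrix_(i, j)
    (if (nat_of_ord i + n2 < n1 * n2)%N then
       ((nat_of_ord j == (nat_of_ord i + n2)%N)%:R - (nat_of_ord j == nat_of_ord i)%:R)
     else 0).

Definition absD (n1 n2 : nat) (x : 'cV[R]_(n1 * n2)) : 'cV[R]_(n1 * n2) :=
  \col_i Num.sqrt (((Dh n1 n2 *m x) i 0) ^+ 2 + ((Dv n1 n2 *m x) i 0) ^+ 2).

Definition weights (n1 n2 : nat) (eta p : R) (xt : 'cV[R]_(n1 * n2))
  : 'cV[R]_(n1 * n2) :=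
  \col_i ((eta / Num.sqrt (eta ^+ 2 + (absD xt i 0) ^+ 2)) `^ (1 - p)).

Definition hadamard (k : nat) (u v : 'cV[R]_k) : 'cV[R]_k :=
  \col_i (u i 0 * v i 0).

Definition nonneg (k : nat) (x : 'cV[R]_k) : Prop := forall i, 0 <= x i 0.

Definition lipschitz (a b : nat) (f : 'cV[R]_a -> 'cV[R]_b) : Prop :=
  exists L : R, forall y1 y2, norm2 (f y1 - f y2) <= L * norm2 (y1 - y2).

Definition coercive_on (k : nat) (X : 'cV[R]_k -> Prop) (J : 'cV[R]_k -> R)
  : Prop :=
  forall M : R, exists r : R, forall x, X x -> r < norm2 x -> M < J x.

Definition Jfun (m n1 n2 : nat) (K : 'M[R]_(m, n1 * n2)) (lam eta p : R)
  (Psi : 'cV[R]_m -> 'cV[R]_(n1 * n2)) (y : 'cV[R]_m) (x : 'cV[R]_(n1 * n2))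
  : R :=
  norm2 (K *m x - y) ^+ 2
  + lam * norm1 (hadamard (weights eta p (Psi y)) (absD x)).

End Defs.

From HB Require Import structures.
From mathcomp Require Import all_boot all_order all_algebra.
From mathcomp Require Import all_classical all_reals.
From mathcomp Require Import exp lra.
Set Implicit Arguments.
Unset Strict Implicit.
Unset Printing Implicit Defensive.
Import Order.TTheory GRing.Theory Num.Theory.
Local Open Scope ring_scope.

(* Stacking K, Dh and Dv gives a matrix with trivial kernel, hence with a left
   inverse B, so |x|_1 <= C (|Kx|_1 + |Dh x|_1 + |Dv x|_1).  On a sublevel set
   {J <= M} the data term bounds |Kx - y|_2, hence |Kx|_1, and since every
   weight is positive the weighted term bounds |Dh x|_1 + |Dv x|_1 <= | |Dx| |_1.
   Positivity of the weights holds whatever Psi(y) is, so neither the noise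
   level, the Lipschitz property of Psi, the range of p nor the constraint set
   plays any role. *)

Lemma row_full_ker0 (F : fieldType) (k n : nat) (A : 'M[F]_(k, n)) :
  (forall x : 'cV[F]_n, A *m x = 0 -> x = 0) -> row_full A.
Proof.
move=> A_inj; rewrite /row_full -mxrank_tr.
change (row_free A^T); rewrite -kermx_eq0.
apply/eqP/row_matrixP => i; rewrite row0.
have /sub_kermxP/(congr1 trmx) : (row i (kermx A^T) <= kermx A^T)%MS by rewrite row_sub.
rewrite trmx_mul trmxK trmx0 => /A_inj u0.
by rewrite -[row _ _]trmxK u0 trmx0.
Qed.

Section Norms.
Variable R : realType.
Implicit Types (k : nat).

Lemma norm1_ge0 k (v : 'cV[R]_k) : 0 <= norm1 v.
Proof. exact: sumr_ge0. Qed.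

Lemma norm2_ge0 k (v : 'cV[R]_k) : 0 <= norm2 v.
Proof. exact: sqrtr_ge0. Qed.

Lemma abs_le_norm1 k (v : 'cV[R]_k) i : `|v i 0| <= norm1 v.
Proof. by rewrite /norm1 (bigD1 i) //= ler_wpDr // sumr_ge0. Qed.

Lemma norm1D k (u v : 'cV[R]_k) : norm1 (u + v) <= norm1 u + norm1 v.
Proof. by rewrite -big_split; apply: ler_sum => i _; rewrite mxE ler_normD. Qed.

Lemma norm1_col_mx k1 k2 (u : 'cV[R]_k1) (v : 'cV[R]_k2) :
  norm1 (col_mx u v) = norm1 u + norm1 v.
Proof.
rewrite /norm1 big_split_ord /=.
by congr (_ + _); apply: eq_bigr => i _; rewrite ?col_mxEu ?col_mxEd.
Qed.

Lemma norm1_mulmx k l (A : 'M[R]_(k, l)) (v : 'cV[R]_l) :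
  norm1 (A *m v) <= (\sum_i \sum_j `|A i j|) * norm1 v.
Proof.
rewrite /norm1 mulr_suml; apply: ler_sum => i _; rewrite mxE mulr_suml.
apply: (le_trans (ler_norm_sum _ _ _)); apply: ler_sum => j _.
by rewrite normrM ler_wpM2l // abs_le_norm1.
Qed.

Lemma abs_le_norm2 k (v : 'cV[R]_k) i : `|v i 0| <= norm2 v.
Proof.
rewrite -sqrtr_sqr ler_sqrt ?sumr_ge0 // => [|j _]; last exact: sqr_ge0.
by rewrite (bigD1 i) //= ler_wpDr ?sumr_ge0 // => j _; exact: sqr_ge0.
Qed.

Lemma norm1_le_norm2 k (v : 'cV[R]_k) : norm1 v <= k%:R * norm2 v.
Proof.
rewrite mulr_natl -[k in _ *+ k]card_ord -sumr_const.
by apply: ler_sum => i _; exact: abs_le_norm2.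
Qed.

Lemma norm2_le_norm1 k (v : 'cV[R]_k) : norm2 v <= norm1 v.
Proof.
rewrite -[norm1 v]ger0_norm ?norm1_ge0 // -sqrtr_sqr ler_sqrt ?sqr_ge0 //.
rewrite expr2 {2}/norm1 mulr_sumr.
apply: ler_sum => i _; rewrite -real_normK ?num_real // expr2 mulrC ler_wpM2r //.
exact: abs_le_norm1.
Qed.

Lemma norm1_le_hadamard k (w v : 'cV[R]_k) : (forall i, 0 < w i 0) ->
  norm1 v <= (\sum_i (w i 0)^-1) * norm1 (hadamard w v).
Proof.
move=> w_gt0; rewrite /norm1 mulr_sumr; apply: ler_sum => i _.
rewrite /hadamard mxE normrM gtr0_norm // mulrA -{1}[`|v i 0|]mul1r ler_wpM2r //.
rewrite -ler_pdivrMr // div1r (bigD1 i) //= ler_wpDr // sumr_ge0 // => j _.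
by rewrite invr_ge0 ltW.
Qed.

Lemma injective_mulmx_norm1_bound k n (A : 'M[R]_(k, n)) :
  (forall x : 'cV[R]_n, A *m x = 0 -> x = 0) ->
  exists2 C : R, 0 <= C & forall x, norm1 x <= C * norm1 (A *m x).
Proof.
move=> /row_full_ker0/row_fullP[B BA].
exists (\sum_i \sum_j `|B i j|) => [|x]; first by do 2!apply: sumr_ge0 => ? _.
by rewrite -{1}[x]mul1mx -BA -mulmxA norm1_mulmx.
Qed.

Lemma norm1_le_dist k (u y : 'cV[R]_k) :
  norm1 u <= k%:R * norm2 (u - y) + norm1 y.
Proof. by rewrite -{1}(subrK y u) (le_trans (norm1D _ _)) // lerD2r norm1_le_norm2. Qed.

Lemma coercive_onP k (X : 'cV[R]_k -> Prop) (J : 'cV[R]_k -> R) :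
  (forall M, exists r, forall x, X x -> J x <= M -> norm2 x <= r) ->
  coercive_on X J.
Proof.
move=> bounded M; have [r Hr] := bounded M; exists r => x Xx r_lt.
by rewrite ltNge; apply: contraTN r_lt => /(Hr x Xx); rewrite leNgt.
Qed.

End Norms.

Section TotalVariation.
Variables (R : realType) (n1 n2 : nat).
Implicit Type x : 'cV[R]_(n1 * n2).

Lemma abs_le_sqrt_sqrD (a b : R) : `|a| <= Num.sqrt (a ^+ 2 + b ^+ 2).
Proof. by rewrite -sqrtr_sqr ler_sqrt ?addr_ge0 ?sqr_ge0 // lerDl sqr_ge0. Qed.

Lemma norm1_Dh_le_absD x : norm1 (Dh R n1 n2 *m x) <= norm1 (absD x).
Proof.
apply: ler_sum => i _; rewrite [absD _ _ _]mxE.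
by rewrite [leRHS]ger0_norm ?sqrtr_ge0 // abs_le_sqrt_sqrD.
Qed.

Lemma norm1_Dv_le_absD x : norm1 (Dv R n1 n2 *m x) <= norm1 (absD x).
Proof.
apply: ler_sum => i _; rewrite [absD _ _ _]mxE.
by rewrite [leRHS]ger0_norm ?sqrtr_ge0 // addrC abs_le_sqrt_sqrD.
Qed.

Lemma weights_gt0 (eta p : R) (xt : 'cV[R]_(n1 * n2)) i :
  0 < eta -> 0 < weights eta p xt i 0.
Proof.
move=> eta_gt0; rewrite mxE powR_gt0 // divr_gt0 // sqrtr_gt0.
by rewrite ltr_wpDr ?sqr_ge0 ?exprn_gt0.
Qed.

End TotalVariation.

Section Coercivity.
Variables (R : realType) (m n1 n2 : nat) (K : 'M[R]_(m, n1 * n2)) (lam eta p : R).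
Hypotheses (lam_gt0 : 0 < lam) (eta_gt0 : 0 < eta).
Hypothesis ker0 : forall x : 'cV[R]_(n1 * n2),
  K *m x = 0 -> Dh R n1 n2 *m x = 0 -> Dv R n1 n2 *m x = 0 -> x = 0.
Variables (Psi : 'cV[R]_m -> 'cV[R]_(n1 * n2)) (y : 'cV[R]_m).

Let KD := col_mx K (col_mx (Dh R n1 n2) (Dv R n1 n2)).

Lemma norm1_KD (x : 'cV[R]_(n1 * n2)) :
  norm1 (KD *m x) = norm1 (K *m x) + norm1 (Dh R n1 n2 *m x) + norm1 (Dv R n1 n2 *m x).
Proof. by rewrite !mul_col_mx !norm1_col_mx addrA. Qed.

Lemma KD_inj (x : 'cV[R]_(n1 * n2)) : KD *m x = 0 -> x = 0.
Proof.
move/eqP; rewrite !mul_col_mx !col_mx_eq0 => /and3P[/eqP Kx /eqP Dhx /eqP Dvx].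
exact: ker0.
Qed.

Lemma Jfun_sublevel_bounded M : exists r, forall x,
  Jfun K lam eta p Psi y x <= M -> norm2 x <= r.
Proof.
set w := weights eta p (Psi y); pose W := \sum_i (w i 0)^-1.
have [C C_ge0 HC] := injective_mulmx_norm1_bound KD_inj.
exists (C * (m%:R * (1 + `|M|) + norm1 y + 2 * (W * (`|M| / lam)))) => x.
rewrite /Jfun -/w; set t := norm2 _; set h := norm1 _ => J_le.
have t_ge0 : 0 <= t by exact: norm2_ge0.
have h_ge0 : 0 <= h by exact: norm1_ge0.
have t_le : t <= 1 + `|M|.
  have := ler_norm M; have := sqr_ge0 (t - 1); rewrite sqrrB1.
  have := mulr_ge0 (ltW lam_gt0) h_ge0; lra.
have h_le : h <= `|M| / lam.
  rewrite ler_pdivlMr // mulrC; have := sqr_ge0 t; have := ler_norm M; lra.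
have w_gt0 i : 0 < w i 0 by exact: weights_gt0.
have TV_le : norm1 (absD x) <= W * (`|M| / lam).
  apply: le_trans (norm1_le_hadamard (absD x) w_gt0) _.
  by rewrite ler_wpM2l // sumr_ge0 // => i _; rewrite invr_ge0 ltW.
have K_le : norm1 (K *m x) <= m%:R * (1 + `|M|) + norm1 y.
  by rewrite (le_trans (norm1_le_dist _ y)) // lerD2r ler_wpM2l.
have := norm1_Dh_le_absD x; have := norm1_Dv_le_absD x => Dv_le Dh_le.
rewrite (le_trans (norm2_le_norm1 x)) // (le_trans (HC x)) // ler_wpM2l //.
rewrite norm1_KD; lra.
Qed.

Lemma Jfun_coercive (X : 'cV[R]_(n1 * n2) -> Prop) :
  coercive_on X (Jfun K lam eta p Psi y).
Proof.
apply: coercive_onP => M; have [r Hr] := Jfun_sublevel_bounded M.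
by exists r => x _; exact: Hr.
Qed.

End Coercivity.

Theorem lemma2 (R : realType) (m n1 n2 : nat) (K : 'M[R]_(m, n1 * n2))
  (lam eta p : R) :
  (m <= n1 * n2)%N ->
  0 < lam -> 0 < eta -> 0 < p -> p < 1 ->
  (forall x : 'cV[R]_(n1 * n2),
      K *m x = 0 -> @Dh R n1 n2 *m x = 0 -> @Dv R n1 n2 *m x = 0 -> x = 0) ->
  forall (delta : R), 0 <= delta ->
  forall Psi : 'cV[R]_m -> 'cV[R]_(n1 * n2), lipschitz Psi ->
  forall (xGT : 'cV[R]_(n1 * n2)) (e : 'cV[R]_m),
    nonneg xGT -> norm2 e <= delta ->
    coercive_on (@nonneg R _) (Jfun K lam eta p Psi (K *m xGT + e)).
Proof.
move=> _ lam_gt0 eta_gt0 _ _ ker0 delta _ Psi _ xGT e _ _.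
exact: Jfun_coercive.
Qed.
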